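(* Let $L_0\in\mathbb{R}^{n\times n}$ have reduced SVD $L_0=U\Sigma V^*$, let $S_0\in\mathbb{R}^{n\times n}$ with support $\Omega$, and let $0<\lambda<1$. Assume $\|\mathcal{P}_\Omega\mathcal{P}_T\|\le 1/2$. Then $(L_0,S_0)$ is the unique solution of \[ \text{minimize } \|L\|_*+\lambda\|S\|_1\quad\text{subject to}\quad L+S=L_0+S_0 \] if there is a triple $(W,F,D)$ of $n\times n$ matrices obeying \[ UV^*+W=\lambda(\mathrm{sgn}(S_0)+F+\mathcal{P}_\Omega D) \] with $\mathcal{P}_TW=0$, $\|W\|\le\frac12$, $\mathcal{P}_\Omega F=0$, $\|F\|_\infty\le\frac12$, and $\|\mathcal{P}_\Omega D\|_F\le\frac14$.
   Context: $U,V\in\mathbb{R}^{n\times r}$ have orthonormal columns. $T=\{UX^*+YV^*: X,Y\in\mathbb{R}^{n\times r}\}$ and $\mathcal{P}_T$ is the orthogonal projection onto $T$ with respect to the trace inner product. $\mathcal{P}_\Omega X$ keeps the entries of $X$ in $\Omega$ and zeroes the others. For linear maps on matrices, $\|\cdot\|$ is the operator norm with respect to the Frobenius norm; for matrices, $\|W\|$ is the spectral norm, $\|\cdot\|_F$ the Frobenius norm, $\|F\|_\infty=\max_{ij}|F_{ij}|$, $\|\cdot\|_*$ the nuclear norm and $\|S\|_1=\sum_{ij}|S_{ij}|$. $\mathrm{sgn}$ is the entrywise sign with $\mathrm{sgn}(0)=0$. *)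

From mathcomp Require Import all_boot all_order all_algebra.
From mathcomp Require Import boolp classical_sets reals.
Set Implicit Arguments. Unset Strict Implicit. Unset Printing Implicit Defensive.
Import Order.TTheory GRing.Theory Num.Theory.
Local Open Scope ring_scope.
Local Open Scope classical_set_scope.

Section Defs.
Variable R : realType.
Variable n : nat.

Definition trinner (A B : 'M[R]_n) : R := \tr (A^T *m B).

Definition frob (A : 'M[R]_n) : R := Num.sqrt (\sum_i \sum_j A i j ^+ 2).

Definition infnorm (A : 'M[R]_n) : R := \big[Num.max/0]_i \big[Num.max/0]_j `|A i j|.

Definition l1norm (A : 'M[R]_n) : R := \sum_i \sum_j `|A i j|.

Definition vnorm (x : 'cV[R]_n) : R := Num.sqrt (\sum_i x i 0 ^+ 2).

Definition specnorm (W : 'M[R]_n) : R :=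
  sup [set vnorm (W *m x) | x in [set x : 'cV[R]_n | vnorm x <= 1]].

Definition singular_values (L : 'M[R]_n) (s : 'rV[R]_n) : Prop :=
  exists P Q : 'M[R]_n, P^T *m P = 1%:M /\ Q^T *m Q = 1%:M /\
    (forall i, 0 <= s 0 i) /\ L = P *m diag_mx s *m Q^T.

(* nuclear norm: sum of the singular values (the set below is a singleton) *)
Definition nucnorm (L : 'M[R]_n) : R :=
  sup [set \sum_i s 0 i | s in [set s | singular_values L s]].

Definition opnorm (f : 'M[R]_n -> 'M[R]_n) : R :=
  sup [set frob (f X) | X in [set X : 'M[R]_n | frob X <= 1]].

Definition inT (r : nat) (U V : 'M[R]_(n, r)) (Z : 'M[R]_n) : Prop :=
  exists X Y : 'M[R]_(n, r), Z = U *m X^T + Y *m V^T.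

Definition PT (r : nat) (U V : 'M[R]_(n, r)) (X : 'M[R]_n) : 'M[R]_n :=
  xget 0 [set Y | inT U V Y /\ forall Z, inT U V Z -> trinner Z (X - Y) = 0].

Definition supp (S : 'M[R]_n) : {set 'I_n * 'I_n} :=
  [set ij | S ij.1 ij.2 != 0].

Definition PO (Om : {set 'I_n * 'I_n}) (X : 'M[R]_n) : 'M[R]_n :=
  \matrix_(i, j) (if (i, j) \in Om then X i j else 0).

Definition sgnm (S : 'M[R]_n) : 'M[R]_n := \matrix_(i, j) Num.sg (S i j).

End Defs.

From mathcomp Require Import all_boot all_order all_algebra.
From mathcomp Require Import boolp classical_sets reals.
From mathcomp Require Import complex.
From mathcomp Require Import ring lra.
Set Implicit Arguments. Unset Strict Implicit. Unset Printing Implicit Defensive.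
Import Order.TTheory GRing.Theory Num.Theory.
Local Open Scope ring_scope.

(* Write a feasible pair as (L0 + H, S0 - H).  For every Z with ||Z|| <= 1,
   U V^* + P_T^perp Z is a subgradient of the nuclear norm at L0; taking Z
   norming P_T^perp H gives ||L0 + H||_* >= ||L0||_* + <U V^*, H> + ||P_T^perp H||_*.
   Similarly sgn S0 + F is a subgradient of the l1 norm at S0 which gains half
   of the l1 mass of H off Omega.  Substituting the certificate for U V^*, the
   W term costs at most ||P_T^perp H||_* / 2 and the D term is controlled by
   ||P_Omega H||_F <= ||P_Omega P_T H||_F + ||P_T^perp H||_F, where the bound
   ||P_Omega P_T|| <= 1/2 absorbs half of ||H||_F.  Altogether the objective
   grows by at least lambda/4 ||H - P_Omega H||_1 + (1 - lambda)/2 ||P_T^perp H||_*,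
   which vanishes only when H = 0.  The singular value decompositions behind
   the nuclear norm are built by Householder deflation from real eigenvectors
   of L^T L. *)

Section SumsOfSquares.
Variable R : rcfType.
Variable I : finType.
Implicit Types a b : I -> R.

Lemma sumr_sqr_ge0 a : 0 <= \sum_i a i ^+ 2.
Proof. by apply: sumr_ge0 => i _; rewrite sqr_ge0. Qed.

Lemma sumr_sqr_eq0 a : \sum_i a i ^+ 2 = 0 -> forall i, a i = 0.
Proof.
move=> /eqP; rewrite psumr_eq0 => [/allP H i|i _]; last by rewrite sqr_ge0.
by apply/eqP; rewrite -sqrf_eq0; apply: (implyP (H i _)); rewrite ?mem_index_enum.
Qed.

Lemma cauchy_schwarz_sqr a b :
  (\sum_i a i * b i) ^+ 2 <= (\sum_i a i ^+ 2) * (\sum_i b i ^+ 2).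
Proof.
set A := \sum_i a i ^+ 2; set B := \sum_i b i ^+ 2; set C := \sum_i a i * b i.
have [A0|Ann] := eqVneq A 0.
  have -> : C = 0 by rewrite /C big1 // => i _; rewrite (sumr_sqr_eq0 A0) mul0r.
  by rewrite expr0n /= A0 mul0r.
have A_gt0 : 0 < A by rewrite lt_neqAle eq_sym Ann sumr_sqr_ge0.
have : \sum_i (C * a i - A * b i) ^+ 2 = A * (A * B - C ^+ 2).
  transitivity (\sum_i (C ^+ 2 * a i ^+ 2 - (2 * C * A) * (a i * b i) + A ^+ 2 * b i ^+ 2)).
    by apply: eq_bigr => i _; ring.
  rewrite big_split /= sumrB -!mulr_sumr -/A -/B -/C; ring.
move=> eq_sum; have := sumr_sqr_ge0 (fun i => C * a i - A * b i).
by rewrite eq_sum pmulr_rge0 // subr_ge0.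
Qed.

Lemma cauchy_schwarz a b :
  `|\sum_i a i * b i| <= Num.sqrt (\sum_i a i ^+ 2) * Num.sqrt (\sum_i b i ^+ 2).
Proof.
rewrite -sqrtrM ?sumr_sqr_ge0 // -sqrtr_sqr ler_sqrt ?cauchy_schwarz_sqr //.
by rewrite mulr_ge0 ?sumr_sqr_ge0.
Qed.

Lemma sqrt_sumr_sqrD_le a b :
  Num.sqrt (\sum_i (a i + b i) ^+ 2) <=
  Num.sqrt (\sum_i a i ^+ 2) + Num.sqrt (\sum_i b i ^+ 2).
Proof.
rewrite -(ler_pXn2r (n:=2)) ?nnegrE ?addr_ge0 ?sqrtr_ge0 //.
rewrite sqr_sqrtr ?sumr_sqr_ge0 //.
have -> : \sum_i (a i + b i) ^+ 2 =
    \sum_i a i ^+ 2 + 2 * \sum_i a i * b i + \sum_i b i ^+ 2.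
  by rewrite mulr_sumr -!big_split /=; apply: eq_bigr => i _; ring.
have := le_trans (ler_norm _) (cauchy_schwarz a b).
have := sqr_sqrtr (sumr_sqr_ge0 a); have := sqr_sqrtr (sumr_sqr_ge0 b).
move: (Num.sqrt _) (Num.sqrt _) => sb sa <- <-; nra.
Qed.

Lemma sqrt_sumr_sqr_le_norm a : Num.sqrt (\sum_i a i ^+ 2) <= \sum_i `|a i|.
Proof.
rewrite -(ler_pXn2r (n:=2)) ?nnegrE ?sqrtr_ge0 ?sumr_ge0 //.
rewrite sqr_sqrtr ?sumr_sqr_ge0 // expr2 mulr_suml; apply: ler_sum => i _.
rewrite -real_normK ?num_real // expr2 ler_wpM2l //.
by rewrite (bigD1 i) //= lerDl sumr_ge0.
Qed.

End SumsOfSquares.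

Section DotProduct.
Variable R : rcfType.

Definition dotv m (x y : 'cV[R]_m) : R := (x^T *m y) 0 0.

Lemma dotvE m (x y : 'cV[R]_m) : dotv x y = \sum_i x i 0 * y i 0.
Proof. by rewrite /dotv mxE; apply: eq_bigr => i _; rewrite mxE. Qed.

Lemma trmx_mul_cV m (x y : 'cV[R]_m) : x^T *m y = (dotv x y)%:M.
Proof. exact: mx11_scalar. Qed.

Lemma dotvC m (x y : 'cV[R]_m) : dotv x y = dotv y x.
Proof. by rewrite !dotvE; apply: eq_bigr => i _; rewrite mulrC. Qed.

Lemma dotvDl m (x y z : 'cV[R]_m) : dotv (x + y) z = dotv x z + dotv y z.
Proof. by rewrite /dotv linearD mulmxDl mxE. Qed.

Lemma dotvDr m (x y z : 'cV[R]_m) : dotv z (x + y) = dotv z x + dotv z y.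
Proof. by rewrite dotvC dotvDl !(dotvC z). Qed.

Lemma dotvBl m (x y z : 'cV[R]_m) : dotv (x - y) z = dotv x z - dotv y z.
Proof. by rewrite !dotvE -sumrB; apply: eq_bigr => i _; rewrite !mxE mulrBl. Qed.

Lemma dotvBr m (x y z : 'cV[R]_m) : dotv z (x - y) = dotv z x - dotv z y.
Proof. by rewrite dotvC dotvBl !(dotvC z). Qed.

Lemma dotv_sqr m (x : 'cV[R]_m) : dotv x x = \sum_i x i 0 ^+ 2.
Proof. by rewrite dotvE; apply: eq_bigr => i _; rewrite expr2. Qed.

Lemma dotv_ge0 m (x : 'cV[R]_m) : 0 <= dotv x x.
Proof. by rewrite dotv_sqr sumr_sqr_ge0. Qed.

Lemma dotv_eq0 m (x : 'cV[R]_m) : (dotv x x == 0) = (x == 0).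
Proof.
apply/eqP/eqP => [|->]; last by rewrite /dotv mulmx0 mxE.
rewrite dotv_sqr => /sumr_sqr_eq0 x0.
by apply/matrixP => i j; rewrite ord1 x0 mxE.
Qed.

Lemma dotv_mulmx m k (P : 'M[R]_(m, k)) (y z : 'cV[R]_k) :
  dotv (P *m y) (P *m z) = dotv y (P^T *m P *m z).
Proof. by rewrite /dotv trmx_mul !mulmxA. Qed.

Lemma dotv_col m k p (A : 'M[R]_(m, k)) (B : 'M[R]_(m, p)) i j :
  dotv (col i A) (col j B) = (A^T *m B) i j.
Proof. by rewrite dotvE mxE; apply: eq_bigr => l _; rewrite !mxE. Qed.

Lemma dotvZl m a (x y : 'cV[R]_m) : dotv (a *: x) y = a * dotv x y.
Proof. by rewrite /dotv linearZ -scalemxAl mxE. Qed.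

Lemma dotvZr m a (x y : 'cV[R]_m) : dotv x (a *: y) = a * dotv x y.
Proof. by rewrite dotvC dotvZl dotvC. Qed.

Lemma normalize_cV m (x : 'cV[R]_m) : x != 0 ->
  exists2 s : R, 0 < s & dotv x x = s ^+ 2 /\ dotv (s^-1 *: x) (s^-1 *: x) = 1.
Proof.
rewrite -dotv_eq0 => xn0; have x_gt0 : 0 < dotv x x by rewrite lt_def xn0 dotv_ge0.
exists (Num.sqrt (dotv x x)); first by rewrite sqrtr_gt0.
rewrite dotvZl dotvZr mulrA -invfM -expr2 sqr_sqrtr ?dotv_ge0 //.
by split => //; rewrite mulVf ?gt_eqF.
Qed.

End DotProduct.

Section SVD.
Variable R : rcfType.

Lemma realsym_eigenvalue m (A : 'M[R]_m.+1) : A^T = A -> exists a, eigenvalue A a.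
Proof.
move=> symA; pose AC := map_mx (real_complex R) A.
have hermAC : AC \is hermsymmx.
  apply: realsym_hermsym.
    apply/is_hermitianmxP; rewrite expr0 scale1r.
    by apply/matrixP => i j; rewrite !mxE /= -{1}symA mxE.
  by apply/mxOverP => i j; rewrite mxE; apply/complex_realP; eexists.
have /orthomx_spectralP eAC := hermitian_normalmx hermAC.
have /mxOverP/(_ 0 0)/RRe_real d00 := hermitian_spectral_diag_real hermAC.
set P := spectralmx AC in eAC; set d := spectral_diag AC in eAC d00.
exists (complex.Re (d 0 0)); rewrite -(eigenvalue_map (real_complex R)) /= d00.
(* The first row of the unitary P is an eigenvector of AC for d_0. *)
apply/eigenvalueP; exists (row 0 P).
  rewrite -/AC eAC !mulmxA -row_mul mulmxV ?spectral_unit // row1 -mulmxA.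
  by rewrite -rowE row_mul row_diag_mx -scalemxAl -rowE.
apply: contra_neq (@oner_neq0 R[i]) => P0.
have /matrixP/(_ 0 0) := congr1 (mulmx^~ (invmx P)) P0.
by rewrite -row_mul mulmxV ?spectral_unit // row1 mul0mx !mxE eqxx.
Qed.

Lemma realsym_unit_eigenvector m (A : 'M[R]_m.+1) : A^T = A ->
  exists2 x : 'cV[R]_m.+1, dotv x x = 1 & exists a, A *m x = a *: x.
Proof.
move=> symA; have [a /eigenvalueP [v vA vn0]] := realsym_eigenvalue symA.
have /normalize_cV [s _ [_ x1]] : v^T != 0 by rewrite trmx_eq0.
exists (s^-1 *: v^T) => //; exists a.
by rewrite -scalemxAr -symA -trmx_mul vA linearZ /= !scalerA mulrC.
Qed.

Definition reflector m (u : 'cV[R]_m) : 'M[R]_m := 1%:M - 2 *: (u *m u^T).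

Lemma reflector_orthogonal m (u : 'cV[R]_m) : dotv u u = 1 ->
  (reflector u)^T *m reflector u = 1%:M.
Proof.
move=> u1; have -> : (reflector u)^T = reflector u.
  by rewrite /reflector linearB linearZ /= trmx1 trmx_mul trmxK.
rewrite /reflector mulmxBl !mulmxBr mul1mx mulmx1 -!scalemxAl -!scalemxAr.
rewrite !mulmxA -(mulmxA u) trmx_mul_cV u1 mulmx1 !scalerA.
by rewrite mul1mx; move: (u *m u^T) => M; apply/matrixP => i j; rewrite !mxE; lra.
Qed.

Lemma householder m (e x : 'cV[R]_m) : dotv e e = 1 -> dotv x x = 1 ->
  exists2 H : 'M[R]_m, H^T *m H = 1%:M & H *m e = x.
Proof.
move=> e1 x1; have [<-|xne] := eqVneq x e.
  by exists 1%:M; rewrite ?trmx1 mul1mx.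
have /normalize_cV [s s_gt0 [ws u1]] : x - e != 0 by rewrite subr_eq0.
set u := s^-1 *: (x - e) in u1 *.
(* Since x and e are unit vectors, <x - e, e> = -|x - e|^2 / 2. *)
have ue : dotv u e = - s / 2.
  move: ws; rewrite /u dotvZl !(dotvBl, dotvBr) (dotvC e x) e1 x1.
  by move=> ws; apply: (mulfI (lt0r_neq0 s_gt0)); rewrite mulVKf ?lt0r_neq0 //; nra.
exists (reflector u); first exact: reflector_orthogonal.
rewrite /reflector mulmxBl mul1mx -scalemxAl -mulmxA trmx_mul_cV ue mul_mx_scalar.
rewrite scalerA /u scalerA.
have -> : 2 * (- s / 2) / s = -1 by field; rewrite lt0r_neq0.
by rewrite scaleN1r opprK addrC subrK.
Qed.

Lemma singular_pair_of_eigenvector m (L : 'M[R]_m) x a : dotv x x = 1 ->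
  L^T *m L *m x = a *: x -> L *m x != 0 ->
  exists y s, [/\ dotv y y = 1, 0 <= s, L *m x = s *: y & L^T *m y = s *: x].
Proof.
move=> x1 eigx /normalize_cV [s s_gt0 [Lxs y1]].
exists (s^-1 *: (L *m x)), s; split => //; first exact: ltW.
  by rewrite scalerA mulfV ?lt0r_neq0 // scale1r.
have sa : s ^+ 2 = a by rewrite -Lxs dotv_mulmx eigx dotvZr x1 mulr1.
by rewrite -scalemxAr mulmxA eigx scalerA -sa expr2 mulKf ?lt0r_neq0.
Qed.

Lemma singular_pair m (L : 'M[R]_m.+1) : exists x y s,
  [/\ dotv x x = 1, dotv y y = 1, 0 <= s, L *m x = s *: y & L^T *m y = s *: x].
Proof.
have [x x1 [a eigx]] : exists2 x, dotv x x = 1 & exists a, L^T *m L *m x = a *: x.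
  by apply: realsym_unit_eigenvector; rewrite trmx_mul trmxK.
have [Lx0|/(singular_pair_of_eigenvector x1 eigx)] := eqVneq (L *m x) 0; last first.
  by move=> [y [s [y1 s0 Lx LTy]]]; exists x, y, s.
have [y y1 [b eigy]] : exists2 y, dotv y y = 1 & exists b, L^T^T *m L^T *m y = b *: y.
  by apply: realsym_unit_eigenvector; rewrite trmx_mul trmxK.
have [LTy0|/(singular_pair_of_eigenvector y1 eigy)] := eqVneq (L^T *m y) 0.
  by exists x, y, 0; rewrite !scale0r.
by rewrite trmxK => -[z [s [z1 s0 LTy Lz]]]; exists z, y, s.
Qed.

Lemma orthogonal_mul m (A B : 'M[R]_m) : A^T *m A = 1%:M -> B^T *m B = 1%:M ->
  (A *m B)^T *m (A *m B) = 1%:M.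
Proof. by move=> oA oB; rewrite trmx_mul -mulmxA (mulmxA A^T) oA mul1mx. Qed.

Lemma orthogonal_block1 m (P : 'M[R]_m) : P^T *m P = 1%:M ->
  (block_mx 1%:M 0 0 P)^T *m block_mx 1%:M 0 0 P = 1%:M :> 'M[R]_(1 + m).
Proof.
move=> oP; rewrite tr_block_mx mulmx_block !trmx0 trmx1 oP.
by rewrite !mul0mx !mulmx0 !mul1mx !addr0 !add0r -scalar_mx_block.
Qed.

(* Reflections mapping e_0 to a pair of singular vectors split off the
   corresponding singular value. *)
Lemma svd_deflate m (L : 'M[R]_(1 + m)) :
  exists (Hy Hx : 'M[R]_(1 + m)) (s : R) (M : 'M[R]_m),
  [/\ Hy^T *m Hy = 1%:M, Hx^T *m Hx = 1%:M, 0 <= s &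
      L = Hy *m block_mx (s%:M : 'M_1) 0 0 M *m Hx^T].
Proof.
have [x [y [s [x1 y1 s0 Lx LTy]]]] := @singular_pair m L.
pose e : 'cV[R]_(1 + m) := col_mx 1%:M 0.
have e1 : dotv e e = 1.
  by rewrite /dotv tr_col_mx mul_row_col trmx1 mul1mx trmx0 mul0mx addr0 mxE.
have [Hx oHx Hxe] := householder e1 x1; have [Hy oHy Hye] := householder e1 y1.
set M := Hy^T *m L *m Hx.
have Me : M *m e = s *: e.
  by rewrite /M -mulmxA Hxe -mulmxA Lx -scalemxAr -Hye mulmxA oHy mul1mx.
have MTe : M^T *m e = s *: e.
  by rewrite /M !trmx_mul trmxK -!mulmxA Hye LTy -scalemxAr -Hxe mulmxA oHx mul1mx.
exists Hy, Hx, s, (drsubmx M); split => //.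
have -> : block_mx (s%:M : 'M_1) 0 0 (drsubmx M) = M.
  move: Me MTe; rewrite -[M]submxK /e tr_block_mx !mul_block_col !mulmx1 !mulmx0.
  rewrite !addr0 scale_col_mx scaler0 scalemx1 => /eq_col_mx[-> ->] /eq_col_mx[_ ur].
  by rewrite -[ursubmx M]trmxK ur trmx0 !block_mxKdr.
by rewrite /M !mulmxA (mulmx1C oHy) mul1mx -mulmxA (mulmx1C oHx) mulmx1.
Qed.

Theorem svd_exists m (L : 'M[R]_m) : exists P Q (s : 'rV[R]_m),
  [/\ P^T *m P = 1%:M, Q^T *m Q = 1%:M, (forall i, 0 <= s 0 i) &
      L = P *m diag_mx s *m Q^T].
Proof.
elim: m L => [|m IH] L.
  exists 1%:M, 1%:M, 0; rewrite trmx1 mul1mx; split => //; first by case.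
  by apply/matrixP => -[].
have [Hy [Hx [s [M [oHy oHx s0 ->]]]]] := @svd_deflate m L.
have [P [Q [t [oP oQ t0 ->]]]] := IH M.
exists (Hy *m block_mx 1%:M 0 0 P), (Hx *m block_mx 1%:M 0 0 Q), (row_mx (s%:M : 'rV_1) t).
split; [exact: orthogonal_mul (orthogonal_block1 _)..| |].
  by move=> i; rewrite mxE; case: splitP => j _; rewrite // ord1 mxE.
suff -> : block_mx (s%:M : 'M_1) 0 0 (P *m diag_mx t *m Q^T) =
    block_mx 1%:M 0 0 P *m diag_mx (row_mx (s%:M : 'rV_1) t) *m (block_mx 1%:M 0 0 Q)^T.
  by rewrite trmx_mul !mulmxA.
rewrite diag_mx_row tr_block_mx !trmx0 trmx1 !mulmx_block !mul0mx !mulmx0 !mul1mx.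
rewrite !mulmx1 !addr0 !add0r mul0mx; congr block_mx.
by apply/matrixP => i j; rewrite !ord1 !mxE.
Qed.

End SVD.

Section SupOverUnitBall.
Local Open Scope classical_set_scope.
Variable R : realType.

Lemma sup_ball_bound (X Y : lmodType R) (N : X -> R) (M : Y -> R) (f : X -> Y) c :
  (forall a x, N (a *: x) = `|a| * N x) -> (forall a y, M (a *: y) = `|a| * M y) ->
  (forall a x, f (a *: x) = a *: f x) -> (forall x, 0 <= N x) ->
  (exists2 K, 0 <= K & forall x, M (f x) <= K * N x) ->
  sup [set M (f x) | x in [set x | N x <= 1]] <= c -> forall x, M (f x) <= c * N x.
Proof.
move=> NZ MZ fZ N_ge0 [K K0 fK] supc x.
have [Nx0|Nxn0] := eqVneq (N x) 0.
  by apply: le_trans (fK x) _; rewrite Nx0 !mulr0.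
have Nx_gt0 : 0 < N x by rewrite lt_def Nxn0 N_ge0.
set y := (N x)^-1 *: x.
have Ny : N y = 1 by rewrite NZ ger0_norm ?invr_ge0 ?N_ge0 // mulVf.
have : M (f y) <= c.
  apply: le_trans supc; apply: ub_le_sup; last by exists y; rewrite //= Ny.
  by exists K => _ [z Nz <-]; apply: le_trans (fK z) _; rewrite ler_piMr.
by rewrite fZ MZ ger0_norm ?invr_ge0 ?N_ge0 // ler_pdivrMl // mulrC.
Qed.

End SupOverUnitBall.

Section MatrixNorms.
Variable R : realType.

Lemma vnorm_dotv n (x : 'cV[R]_n) : vnorm x = Num.sqrt (dotv x x).
Proof. by rewrite /vnorm dotv_sqr. Qed.

Lemma vnorm_ge0 n (x : 'cV[R]_n) : 0 <= vnorm x.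
Proof. exact: sqrtr_ge0. Qed.

Lemma vnormZ n a (x : 'cV[R]_n) : vnorm (a *: x) = `|a| * vnorm x.
Proof. by rewrite !vnorm_dotv dotvZl dotvZr mulrA -expr2 sqrtrM ?sqr_ge0 // sqrtr_sqr. Qed.

Lemma vnorm_le n (x y : 'cV[R]_n) : (vnorm x <= vnorm y) = (dotv x x <= dotv y y).
Proof. by rewrite !vnorm_dotv ler_sqrt // dotv_ge0. Qed.

Lemma dotv_le_vnorm n (x y : 'cV[R]_n) : dotv x y <= vnorm x * vnorm y.
Proof. by rewrite dotvE; apply: le_trans (ler_norm _) (cauchy_schwarz _ _). Qed.

Lemma vnorm_isometry n k (P : 'M[R]_(n, k)) y :
  P^T *m P = 1%:M -> vnorm (P *m y) = vnorm y.
Proof. by move=> oP; rewrite !vnorm_dotv dotv_mulmx oP mul1mx. Qed.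

Lemma vnorm_col_orthonormal n k (P : 'M[R]_(n, k)) i :
  P^T *m P = 1%:M -> vnorm (col i P) = 1.
Proof. by move=> oP; rewrite vnorm_dotv dotv_col oP mxE eqxx sqrtr1. Qed.

Lemma vnorm_mulmx_le_frob n (A : 'M[R]_n) x : vnorm (A *m x) <= frob A * vnorm x.
Proof.
have A0 : 0 <= \sum_i \sum_j A i j ^+ 2 by apply: sumr_ge0 => i _; exact: sumr_sqr_ge0.
rewrite /vnorm /frob -sqrtrM // ler_sqrt ?mulr_ge0 ?sumr_sqr_ge0 // mulr_suml.
by apply: ler_sum => i _; rewrite mxE; apply: cauchy_schwarz_sqr.
Qed.

Definition spec_bounded n (Z : 'M[R]_n) c := forall x, vnorm (Z *m x) <= c * vnorm x.

Lemma specnorm_bounded n (W : 'M[R]_n) c : specnorm W <= c -> spec_bounded W c.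
Proof.
apply: (sup_ball_bound (N := @vnorm R n) (M := @vnorm R n) (f := mulmx W)).
- exact: vnormZ.
- exact: vnormZ.
- by move=> a x; rewrite scalemxAr.
- exact: vnorm_ge0.
by exists (frob W); [exact: sqrtr_ge0 | exact: vnorm_mulmx_le_frob].
Qed.

End MatrixNorms.

Section Frobenius.
Variable R : realType.
Variable n : nat.
Implicit Types A B C : 'M[R]_n.

Lemma trinnerE A B : trinner A B = \sum_(p : 'I_n * 'I_n) A p.1 p.2 * B p.1 p.2.
Proof.
rewrite -(pair_bigA _ (fun i j => A i j * B i j)) exchange_big /trinner /mxtrace.
by apply: eq_bigr => j _; rewrite mxE; apply: eq_bigr => i _; rewrite !mxE.
Qed.

Lemma frobE A : frob A = Num.sqrt (\sum_(p : 'I_n * 'I_n) A p.1 p.2 ^+ 2).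
Proof. by rewrite /frob pair_bigA. Qed.

Lemma l1normE A : l1norm A = \sum_(p : 'I_n * 'I_n) `|A p.1 p.2|.
Proof. by rewrite /l1norm pair_bigA. Qed.

Lemma trinnerC A B : trinner A B = trinner B A.
Proof. by rewrite /trinner -mxtrace_tr trmx_mul trmxK. Qed.

Lemma trinnerDr A B C : trinner A (B + C) = trinner A B + trinner A C.
Proof. by rewrite /trinner mulmxDr mxtraceD. Qed.

Lemma trinnerBr A B C : trinner A (B - C) = trinner A B - trinner A C.
Proof. by rewrite /trinner mulmxBr raddfB. Qed.

Lemma trinnerZr a A B : trinner A (a *: B) = a * trinner A B.
Proof. by rewrite /trinner -scalemxAr mxtraceZ. Qed.

Lemma trinner0r A : trinner A 0 = 0.
Proof. by rewrite /trinner mulmx0 mxtrace0. Qed.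

Lemma trinnerDl A B C : trinner (B + C) A = trinner B A + trinner C A.
Proof. by rewrite trinnerC trinnerDr !(trinnerC A). Qed.

Lemma trinnerBl A B C : trinner (B - C) A = trinner B A - trinner C A.
Proof. by rewrite trinnerC trinnerBr !(trinnerC A). Qed.

Lemma trinnerZl a A B : trinner (a *: A) B = a * trinner A B.
Proof. by rewrite trinnerC trinnerZr trinnerC. Qed.

Lemma frob_ge0 A : 0 <= frob A.
Proof. exact: sqrtr_ge0. Qed.

Lemma frob_sqrt A : frob A = Num.sqrt (trinner A A).
Proof. by rewrite frobE trinnerE; congr Num.sqrt; apply: eq_bigr => p _; rewrite expr2. Qed.

Lemma trinner_ge0 A : 0 <= trinner A A.
Proof. by rewrite trinnerE; apply: sumr_ge0 => p _; rewrite -expr2 sqr_ge0. Qed.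

Lemma frob_sqr A : frob A ^+ 2 = trinner A A.
Proof. by rewrite frob_sqrt sqr_sqrtr ?trinner_ge0. Qed.

Lemma frob_eq0 A : frob A = 0 -> A = 0.
Proof.
rewrite frobE => /eqP; rewrite sqrtr_eq0 => sum_le0.
have /sumr_sqr_eq0 A0 : \sum_(p : 'I_n * 'I_n) A p.1 p.2 ^+ 2 = 0.
  by apply/le_anti; rewrite sum_le0 sumr_sqr_ge0.
by apply/matrixP => i j; rewrite mxE (A0 (i, j)).
Qed.

Lemma frobZ a A : frob (a *: A) = `|a| * frob A.
Proof.
rewrite !frob_sqrt trinnerZl trinnerZr mulrA -expr2.
by rewrite sqrtrM ?sqr_ge0 // sqrtr_sqr.
Qed.

Lemma trinner_le_frob A B : `|trinner A B| <= frob A * frob B.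
Proof. by rewrite trinnerE !frobE; apply: cauchy_schwarz. Qed.

Lemma frobD_le A B : frob (A + B) <= frob A + frob B.
Proof.
rewrite !frobE; under eq_bigr do rewrite mxE.
exact: (sqrt_sumr_sqrD_le (fun p : 'I_n * 'I_n => A p.1 p.2)).
Qed.

Lemma frob_le_l1norm A : frob A <= l1norm A.
Proof. by rewrite frobE l1normE; apply: sqrt_sumr_sqr_le_norm. Qed.

Lemma l1norm_ge0 A : 0 <= l1norm A.
Proof. by rewrite l1normE sumr_ge0. Qed.

Lemma l1norm0 : l1norm (0 : 'M[R]_n) = 0.
Proof. by rewrite l1normE big1 // => p _; rewrite mxE normr0. Qed.

Lemma l1norm_eq0 A : l1norm A = 0 -> A = 0.
Proof.
rewrite l1normE => /eqP; rewrite psumr_eq0 // => /allP A0.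
apply/matrixP => i j; rewrite mxE; apply/eqP; rewrite -normr_eq0.
by apply: (implyP (A0 (i, j) _)); rewrite ?mem_index_enum.
Qed.

End Frobenius.

Section NuclearNorm.
Variable R : realType.
Variable n : nat.
Implicit Types L Z : 'M[R]_n.

Lemma trinner_svd_le k (P Q : 'M[R]_(n, k)) (g : 'rV[R]_k) Z c :
  P^T *m P = 1%:M -> Q^T *m Q = 1%:M -> (forall i, 0 <= g 0 i) ->
  spec_bounded Z c -> trinner Z (P *m diag_mx g *m Q^T) <= c * \sum_i g 0 i.
Proof.
move=> oP oQ g0 Zc.
have -> : trinner Z (P *m diag_mx g *m Q^T) = \sum_i (Q^T *m Z^T *m P) i i * g 0 i.
  rewrite /trinner !mulmxA mxtrace_mulC !mulmxA mul_mx_diag /mxtrace.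
  by apply: eq_bigr => i _; rewrite mxE.
rewrite mulr_sumr; apply: ler_sum => i _; apply: ler_wpM2r => //.
(* The i-th diagonal entry is <Z q_i, p_i> with unit columns p_i, q_i. *)
rewrite -trmx_mul -dotv_col; apply: le_trans (dotv_le_vnorm _ _) _.
rewrite (vnorm_col_orthonormal i oP) mulr1 colE -mulmxA -colE.
by apply: le_trans (Zc _) _; rewrite (vnorm_col_orthonormal i oQ) mulr1.
Qed.

Lemma trinner_svd k (P Q : 'M[R]_(n, k)) (g : 'rV[R]_k) :
  P^T *m P = 1%:M -> Q^T *m Q = 1%:M ->
  trinner (P *m Q^T) (P *m diag_mx g *m Q^T) = \sum_i g 0 i.
Proof.
move=> oP oQ; rewrite /trinner trmx_mul trmxK !mulmxA -(mulmxA Q) oP mulmx1.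
by rewrite mxtrace_mulC mulmxA oQ mul1mx mxtrace_diag.
Qed.

Lemma orthogonal_spec_bounded (P Q : 'M[R]_n) :
  P^T *m P = 1%:M -> Q^T *m Q = 1%:M -> spec_bounded (P *m Q^T) 1.
Proof.
move=> oP oQ x; rewrite mul1r -mulmxA vnorm_isometry // vnorm_isometry //.
by rewrite trmxK (mulmx1C oQ).
Qed.

Lemma nucnorm_svd L (P Q : 'M[R]_n) (s : 'rV[R]_n) :
  P^T *m P = 1%:M -> Q^T *m Q = 1%:M -> (forall i, 0 <= s 0 i) ->
  L = P *m diag_mx s *m Q^T -> nucnorm L = \sum_i s 0 i.
Proof.
(* Any two SVDs bound each other's singular value sums by trace duality. *)
have sum_le (s1 s2 : 'rV[R]_n) : singular_values L s1 -> singular_values L s2 ->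
    \sum_i s1 0 i <= \sum_i s2 0 i.
  move=> [P1 [Q1 [oP1 [oQ1 [_ eL1]]]]] [P2 [Q2 [oP2 [oQ2 [s20 eL2]]]]].
  rewrite -(trinner_svd s1 oP1 oQ1) -eL1 eL2 -[X in _ <= X]mul1r.
  exact/trinner_svd_le/orthogonal_spec_bounded.
move=> oP oQ s0 eL; have svs : singular_values L s by exists P, Q.
rewrite /nucnorm; apply/le_anti/andP; split.
  apply: ge_sup; first by exists (\sum_i s 0 i), s.
  by move=> _ [s' s's <-]; apply: sum_le.
apply: ub_le_sup; last by exists s.
by exists (\sum_i s 0 i) => _ [s' s's <-]; apply: sum_le.
Qed.

Lemma trinner_le_nucnorm Z c L : spec_bounded Z c -> trinner Z L <= c * nucnorm L.
Proof.
have [P [Q [s [oP oQ s0 eL]]]] := svd_exists L.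
by rewrite (nucnorm_svd oP oQ s0 eL) eL; apply: trinner_svd_le.
Qed.

Lemma nucnorm_attained L : exists2 Z, spec_bounded Z 1 & trinner Z L = nucnorm L.
Proof.
have [P [Q [s [oP oQ s0 eL]]]] := svd_exists L.
exists (P *m Q^T); first exact: orthogonal_spec_bounded.
by rewrite (nucnorm_svd oP oQ s0 eL) eL trinner_svd.
Qed.

Lemma nucnorm_ge0 L : 0 <= nucnorm L.
Proof.
have [P [Q [s [oP oQ s0 eL]]]] := svd_exists L.
by rewrite (nucnorm_svd oP oQ s0 eL) sumr_ge0.
Qed.

Lemma frob_le_nucnorm L : frob L <= nucnorm L.
Proof.
have : frob L ^+ 2 <= frob L * nucnorm L.
  by rewrite frob_sqr; apply: trinner_le_nucnorm => x; apply: vnorm_mulmx_le_frob.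
by have := frob_ge0 L; have := nucnorm_ge0 L; nra.
Qed.

Lemma nucnorm_le_trinner r (U V : 'M[R]_(n, r)) (sigma : 'rV[R]_r) :
  U^T *m U = 1%:M -> V^T *m V = 1%:M -> (forall i, 0 <= sigma 0 i) ->
  nucnorm (U *m diag_mx sigma *m V^T) <= trinner (U *m V^T) (U *m diag_mx sigma *m V^T).
Proof.
move=> oU oV sigma0; have [Z Z1 <-] := nucnorm_attained (U *m diag_mx sigma *m V^T).
by rewrite trinner_svd // -[X in _ <= X]mul1r; apply: trinner_svd_le.
Qed.

End NuclearNorm.

Section ComplementProjection.
Variable R : rcfType.
Variables m k : nat.
Variable U : 'M[R]_(m, k).
Hypothesis oU : U^T *m U = 1%:M.

Definition compl_proj : 'M[R]_m := 1%:M - U *m U^T.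

Lemma compl_proj_sym : compl_proj^T = compl_proj.
Proof. by rewrite /compl_proj linearB /= trmx1 trmx_mul trmxK. Qed.

Lemma compl_projU : compl_proj *m U = 0.
Proof. by rewrite /compl_proj mulmxBl mul1mx -mulmxA oU mulmx1 subrr. Qed.

Lemma trmxU_compl_proj : U^T *m compl_proj = 0.
Proof. by rewrite /compl_proj mulmxBr mulmx1 mulmxA oU mul1mx subrr. Qed.

Lemma compl_proj_idem : compl_proj *m compl_proj = compl_proj.
Proof. by rewrite {1}/compl_proj mulmxBl mul1mx -mulmxA trmxU_compl_proj mulmx0 subr0. Qed.

Lemma dotv_compl_proj_split (z : 'cV[R]_m) :
  dotv z z = dotv (U^T *m z) (U^T *m z) + dotv (compl_proj *m z) (compl_proj *m z).
Proof.
have ez : z = U *m (U^T *m z) + compl_proj *m z.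
  by rewrite /compl_proj mulmxBl mul1mx mulmxA addrC subrK.
have cross : dotv (U *m (U^T *m z)) (compl_proj *m z) = 0.
  by rewrite /dotv trmx_mul -mulmxA (mulmxA U^T) trmxU_compl_proj mul0mx mulmx0 mxE.
rewrite {1 2}ez dotvDl !dotvDr cross dotvC cross addr0 add0r.
by rewrite dotv_mulmx oU mul1mx.
Qed.

Lemma dotv_compl_proj_le (z : 'cV[R]_m) :
  dotv (compl_proj *m z) (compl_proj *m z) <= dotv z z.
Proof. by rewrite [leRHS]dotv_compl_proj_split lerDr dotv_ge0. Qed.

End ComplementProjection.

Section TangentSpace.
Variable R : realType.
Variables n r : nat.
Variables U V : 'M[R]_(n, r).
Hypothesis oU : U^T *m U = 1%:M.
Hypothesis oV : V^T *m V = 1%:M.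
Implicit Types X Y Z : 'M[R]_n.

Definition PTperp X := compl_proj U *m X *m compl_proj V.

Lemma inT_sub_PTperp X : inT U V (X - PTperp X).
Proof.
exists (X^T *m U), (compl_proj U *m X *m V); rewrite trmx_mul trmxK /PTperp.
have e1 : X - compl_proj U *m X = U *m U^T *m X.
  by rewrite /compl_proj mulmxBl mul1mx opprB addrC subrK.
by rewrite {2}/compl_proj mulmxBr mulmx1 opprD opprK addrA e1 !mulmxA.
Qed.

Lemma trinner_PTperp Y X : trinner (PTperp Y) X = trinner Y (PTperp X).
Proof.
rewrite /trinner /PTperp !trmx_mul !compl_proj_sym !mulmxA.
by rewrite [RHS]mxtrace_mulC !mulmxA.
Qed.

Lemma trinner_inT_PTperp Z X : inT U V Z -> trinner Z (PTperp X) = 0.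
Proof.
move=> [A [B ->]]; rewrite trinnerDl /trinner !trmx_mul !trmxK /PTperp.
rewrite !mulmxA -(mulmxA A) trmxU_compl_proj // mulmx0 !mul0mx mxtrace0 add0r.
by rewrite mxtrace_mulC !mulmxA compl_projU // !mul0mx mxtrace0.
Qed.

Lemma inTB Y Z : inT U V Y -> inT U V Z -> inT U V (Y - Z).
Proof.
move=> [A1 [B1 ->]] [A2 [B2 ->]]; exists (A1 - A2), (B1 - B2).
by rewrite linearB /= mulmxBr mulmxBl opprD addrACA.
Qed.

Lemma PTE X : PT U V X = X - PTperp X.
Proof.
rewrite /PT; apply: xget_unique.
  split; first exact: inT_sub_PTperp.
  by move=> Z TZ; rewrite opprB addrC subrK; apply: trinner_inT_PTperp.
move=> Y [TY Y_orth]; set D := Y - (X - PTperp X).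
have TD : inT U V D := inTB TY (inT_sub_PTperp X).
(* D lies in T and is orthogonal to both X - Y and PTperp X = (X - Y) + D. *)
have eD : D = PTperp X - (X - Y) by rewrite /D !opprB addrCA.
have : trinner D D = 0 by rewrite {2}eD trinnerBr trinner_inT_PTperp // Y_orth // subrr.
rewrite -frob_sqr => /eqP; rewrite sqrf_eq0 => /eqP/frob_eq0/eqP.
by rewrite subr_eq0 => /eqP.
Qed.

Lemma PTZ a X : PT U V (a *: X) = a *: PT U V X.
Proof. by rewrite !PTE /PTperp scalerBr -scalemxAr -scalemxAl. Qed.

Lemma frob_PT_le X : frob (PT U V X) <= frob X.
Proof.
rewrite PTE -(ler_pXn2r (n:=2)) ?nnegrE ?frob_ge0 // !frob_sqr.
have o : trinner (X - PTperp X) (PTperp X) = 0.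
  exact/trinner_inT_PTperp/inT_sub_PTperp.
have := subrK (PTperp X) X; move: o; move: (PTperp X) (X - PTperp X) => B A o <-.
by rewrite trinnerDl !trinnerDr o trinnerC o addr0 add0r lerDl trinner_ge0.
Qed.

Lemma spec_bounded_UV_PTperp Z : spec_bounded Z 1 ->
  spec_bounded (U *m V^T + PTperp Z) 1.
Proof.
move=> Z1 x; rewrite mul1r vnorm_le.
set y := V^T *m x; set z := Z *m (compl_proj V *m x).
have -> : (U *m V^T + PTperp Z) *m x = U *m y + compl_proj U *m z.
  by rewrite mulmxDl /y /z /PTperp !mulmxA.
rewrite (dotv_compl_proj_split oU) (dotv_compl_proj_split oV x) -/y.
have -> : U^T *m (U *m y + compl_proj U *m z) = y.
  by rewrite mulmxDr mulmxA oU mul1mx mulmxA trmxU_compl_proj // mul0mx addr0.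
have -> : compl_proj U *m (U *m y + compl_proj U *m z) = compl_proj U *m z.
  by rewrite mulmxDr !mulmxA compl_projU // !mul0mx add0r compl_proj_idem.
rewrite lerD2l.
apply: le_trans (dotv_compl_proj_le oU _) _; rewrite -vnorm_le.
by apply: le_trans (Z1 _) _; rewrite mul1r.
Qed.

End TangentSpace.

Section SupportProjection.
Variable R : realType.
Variable n : nat.
Variable Om : {set 'I_n * 'I_n}.
Implicit Types A B X : 'M[R]_n.

Lemma POD A B : PO Om (A + B) = PO Om A + PO Om B.
Proof. by apply/matrixP => i j; rewrite !mxE; case: ifP; rewrite ?addr0. Qed.

Lemma POZ a A : PO Om (a *: A) = a *: PO Om A.
Proof. by apply/matrixP => i j; rewrite !mxE; case: ifP; rewrite ?mulr0. Qed.

Lemma frob_PO_le A : frob (PO Om A) <= frob A.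
Proof.
rewrite !frobE ler_sqrt ?sumr_sqr_ge0 //; apply: ler_sum => p _.
by rewrite mxE; case: ifP; rewrite ?expr0n ?sqr_ge0.
Qed.

Lemma trinner_PO A B : trinner (PO Om A) B = trinner (PO Om A) (PO Om B).
Proof.
by rewrite !trinnerE; apply: eq_bigr => p _; rewrite !mxE; case: ifP; rewrite ?mul0r.
Qed.

Lemma opnorm_PO_PT r (U V : 'M[R]_(n, r)) c :
  U^T *m U = 1%:M -> V^T *m V = 1%:M ->
  opnorm (fun X => PO Om (PT U V X)) <= c ->
  forall X, frob (PO Om (PT U V X)) <= c * frob X.
Proof.
move=> oU oV; apply: (sup_ball_bound (N := @frob R n) (M := @frob R n)).
- exact: frobZ.
- exact: frobZ.
- by move=> a X; rewrite PTZ // POZ.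
- exact: frob_ge0.
exists 1 => // X; rewrite mul1r; apply: le_trans (frob_PO_le _) _.
exact: frob_PT_le.
Qed.

End SupportProjection.

Section EntrywiseNorms.
Variable R : realType.
Variable n : nat.

Lemma infnorm_ge (F : 'M[R]_n) i j : `|F i j| <= infnorm F.
Proof. exact: le_trans (le_bigmax _ (fun j => `|F i j|) j) (le_bigmax _ _ i). Qed.

Lemma sg_sub_le_norm (s h : R) : `|s| - Num.sg s * h <= `|s - h|.
Proof.
have [s_gt0|s_lt0|->] := ltrgtP s 0.
- by rewrite ltr0_sg // ltr0_norm // mulN1r opprK -normrN opprB addrC ler_norm.
- by rewrite gtr0_sg // gtr0_norm // mul1r ler_norm.
by rewrite sgr0 normr0 mul0r subr0 sub0r normrN normr_ge0.
Qed.

(* The sign pattern of S0 is a subgradient of the l1 norm at S0; F, vanishing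
   on the support of S0 and bounded by 1/2, adds half of the off-support mass. *)
Lemma l1norm_sub_ge (S0 H F : 'M[R]_n) :
  PO (supp S0) F = 0 -> infnorm F <= 1 / 2 ->
  l1norm S0 - trinner (sgnm S0) H + 1 / 2 * l1norm (H - PO (supp S0) H)
    <= l1norm (S0 - H) + trinner F H.
Proof.
move=> F_off F_le; rewrite !l1normE !trinnerE mulr_sumr -sumrB -!big_split /=.
apply: ler_sum => -[i j] _ /=; rewrite !mxE /supp inE /=.
have /matrixP/(_ i j) := F_off; rewrite !mxE /supp inE /=.
have := le_trans (infnorm_ge F i j) F_le.
have := sg_sub_le_norm (S0 i j) (H i j).
have [->|s_neq0] := eqVneq (S0 i j) 0 => /=.
  rewrite normr0 sgr0 mul0r !subr0 !add0r normrN => _ Fle _.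
  have : - (`|F i j| * `|H i j|) <= F i j * H i j.
    by rewrite -normrM lerNl -normrN ler_norm.
  have : `|F i j| * `|H i j| <= 1 / 2 * `|H i j| by rewrite ler_wpM2r.
  lra.
by move=> sub _ ->; rewrite subrr normr0 mulr0 addr0 mul0r addr0.
Qed.

End EntrywiseNorms.

Section DualCertificate.
Variable R : realType.
Variables n r : nat.
Variables (U V : 'M[R]_(n, r)) (sigma : 'rV[R]_r) (lambda : R).
Variables L0 S0 W F D : 'M[R]_n.
Hypotheses (oU : U^T *m U = 1%:M) (oV : V^T *m V = 1%:M).
Hypothesis sigma_ge0 : forall i, 0 <= sigma 0 i.
Hypothesis L0_svd : L0 = U *m diag_mx sigma *m V^T.
Hypotheses (lambda_gt0 : 0 < lambda) (lambda_lt1 : lambda < 1).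
Hypothesis PO_PT_le : opnorm (fun X => PO (supp S0) (PT U V X)) <= 1 / 2.
Hypothesis certificate : U *m V^T + W = lambda *: (sgnm S0 + F + PO (supp S0) D).
Hypotheses (W_PT : PT U V W = 0) (W_le : specnorm W <= 1 / 2).
Hypotheses (F_PO : PO (supp S0) F = 0) (F_le : infnorm F <= 1 / 2).
Hypothesis D_le : frob (PO (supp S0) D) <= 1 / 4.

Local Notation Om := (supp S0).
Local Notation PTp := (PTperp U V).

Lemma nucnorm_add_ge H :
  nucnorm L0 + trinner (U *m V^T) H + nucnorm (PTp H) <= nucnorm (L0 + H).
Proof.
have [Z Z1 ZH] := nucnorm_attained (PTp H).
have PTp_L0 : PTp L0 = 0 by rewrite /PTperp L0_svd !mulmxA compl_projU // !mul0mx.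
have := trinner_le_nucnorm (L0 + H) (spec_bounded_UV_PTperp oU oV Z1).
rewrite mul1r trinnerDl !trinnerDr !trinner_PTperp PTp_L0 ZH.
rewrite trinner0r add0r => /(le_trans _); apply.
by rewrite !lerD2r L0_svd nucnorm_le_trinner.
Qed.

Lemma trinner_W_le H : trinner W H <= 1 / 2 * nucnorm (PTp H).
Proof.
have -> : W = PTp W by apply/eqP; rewrite -subr_eq0 -PTE // W_PT.
by rewrite trinner_PTperp; apply/trinner_le_nucnorm/specnorm_bounded.
Qed.

Lemma frob_PO_bound H :
  frob (PO Om H) <= l1norm (H - PO Om H) + 2 * nucnorm (PTp H).
Proof.
have split_T : frob (PO Om H) <= 1 / 2 * frob H + nucnorm (PTp H).
  rewrite -{1}(subrK (PTp H) H) -PTE // POD; apply: le_trans (frobD_le _ _) _.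
  apply: lerD; first exact: opnorm_PO_PT.
  exact: le_trans (frob_PO_le _ _) (frob_le_nucnorm _).
have split_Om : frob H <= frob (PO Om H) + l1norm (H - PO Om H).
  rewrite -{1}(subrK (PO Om H) H) addrC; apply: le_trans (frobD_le _ _) _.
  by rewrite lerD2l frob_le_l1norm.
lra.
Qed.

Definition gain H :=
  lambda / 4 * l1norm (H - PO Om H) + (1 - lambda) / 2 * nucnorm (PTp H).

Lemma gain_ge0 H : 0 <= gain H.
Proof.
by rewrite addr_ge0 // mulr_ge0 ?l1norm_ge0 ?nucnorm_ge0 // divr_ge0 // ?subr_ge0 ltW.
Qed.

Lemma objective_gain L S : L + S = L0 + S0 ->
  nucnorm L0 + lambda * l1norm S0 + gain (L - L0) <= nucnorm L + lambda * l1norm S.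
Proof.
move=> LS; have -> : S = S0 - (L - L0).
  by apply/matrixP => i j; move/matrixP/(_ i j): LS; rewrite !mxE; lra.
have -> : nucnorm L = nucnorm (L0 + (L - L0)) by rewrite addrC subrK.
set H := L - L0.
have UV_H : trinner (U *m V^T) H = lambda * trinner (sgnm S0) H + lambda * trinner F H
    + lambda * trinner (PO Om D) H - trinner W H.
  rewrite -[U *m V^T](addrK W) certificate trinnerBl trinnerZl !trinnerDl; ring.
have D_H : - (1 / 4 * (l1norm (H - PO Om H) + 2 * nucnorm (PTp H)))
    <= trinner (PO Om D) H.
  rewrite trinner_PO lerNl; apply: le_trans (ler_norm _) _; rewrite normrN.
  apply: le_trans (trinner_le_frob _ _) _.
  by apply: ler_pM; rewrite ?frob_ge0 ?frob_PO_bound.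
have l0 := ltW lambda_gt0.
have := ler_wpM2l l0 D_H; have := ler_wpM2l l0 (l1norm_sub_ge H F_PO F_le).
have := nucnorm_add_ge H; have := trinner_W_le H; rewrite /gain; lra.
Qed.

Lemma gain_eq0 H : gain H = 0 -> H = 0.
Proof.
rewrite /gain => g0.
have a_ge0 := mulr_ge0 (ltW lambda_gt0) (l1norm_ge0 (H - PO Om H)).
have N_ge0 : 0 <= (1 - lambda) * nucnorm (PTp H).
  by rewrite mulr_ge0 ?nucnorm_ge0 // subr_ge0 ltW.
have /eqP : (1 - lambda) * nucnorm (PTp H) = 0 by lra.
rewrite mulf_eq0 subr_eq0 (gt_eqF lambda_lt1) => /eqP N0.
have /eqP : lambda * l1norm (H - PO Om H) = 0 by lra.
rewrite mulf_eq0 (gt_eqF lambda_gt0) => /eqP/l1norm_eq0 off.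
have /frob_eq0 on : frob (PO Om H) = 0.
  apply/le_anti; rewrite frob_ge0 andbT.
  by have := frob_PO_bound H; rewrite off N0 l1norm0 mulr0 addr0.
by rewrite -(subrK (PO Om H) H) off on addr0.
Qed.

End DualCertificate.

Theorem lemma2p4 (R : realType) (n r : nat)
  (L0 S0 : 'M[R]_n) (U V : 'M[R]_(n, r)) (sigma : 'rV[R]_r) (lambda : R) :
  U^T *m U = 1%:M -> V^T *m V = 1%:M ->
  (forall i, 0 < sigma 0 i) ->
  L0 = U *m diag_mx sigma *m V^T ->
  0 < lambda -> lambda < 1 ->
  opnorm (fun X => PO (supp S0) (PT U V X)) <= 1 / 2 ->
  (exists W F D : 'M[R]_n,
      U *m V^T + W = lambda *: (sgnm S0 + F + PO (supp S0) D) /\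
      PT U V W = 0 /\ specnorm W <= 1 / 2 /\
      PO (supp S0) F = 0 /\ infnorm F <= 1 / 2 /\
      frob (PO (supp S0) D) <= 1 / 4) ->
  (forall L S : 'M[R]_n, L + S = L0 + S0 ->
      nucnorm L0 + lambda * l1norm S0 <= nucnorm L + lambda * l1norm S) /\
  (forall L S : 'M[R]_n, L + S = L0 + S0 ->
      nucnorm L + lambda * l1norm S = nucnorm L0 + lambda * l1norm S0 ->
      L = L0 /\ S = S0).
Proof.
move=> oU oV sigma_gt0 L0_svd l_gt0 l_lt1 PO_PT.
move=> [W [F [D [cert [W_PT [W_le [F_PO [F_le D_le]]]]]]]].
have sigma_ge0 i : 0 <= sigma 0 i by apply: ltW.
have gain_le :=
  objective_gain oU oV sigma_ge0 L0_svd l_gt0 PO_PT cert W_PT W_le F_PO F_le D_le.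
have gain_pos L := gain_ge0 U V S0 l_gt0 l_lt1 (L - L0).
split => [L S LS | L S LS opt].
  by have := gain_le L S LS; have := gain_pos L; lra.
have /eqP : L - L0 = 0.
  apply: (gain_eq0 oU oV l_gt0 l_lt1 PO_PT).
  by have := gain_le L S LS; have := gain_pos L; lra.
rewrite subr_eq0 => /eqP L_eq; split => //.
by move: LS; rewrite L_eq => /addrI.
Qed.
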